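(* Let $\mathbb A$ be an abelian category with enough projective objects. Let $(f_0,f_1):a\to b$ be a morphism in $\mathbb A^{[1]}_c$ and let $g:\mathrm{Ker}(a)\to\mathrm{Ker}(b)$ and $h:\mathrm{Coker}(a)\to\mathrm{Coker}(b)$ be the induced morphisms. Then $(f_0,f_1)$ is fully faithful in $\mathbb A^{[1]}_c$ if and only if $g$ is an isomorphism and $h$ is a monomorphism in $\mathbb A$.
   Context: Let $\mathbb A$ be an abelian category. The 2-category $\mathbb A^{[1]}$ has as objects the morphisms $a:A_1\to A_0$ of $\mathbb A$. For objects $a:A_1\to A_0$ and $b:B_1\to B_0$, a morphism $a\to b$ is a pair $(f_0,f_1)$ of morphisms $f_i:A_i\to B_i$ of $\mathbb A$ with $b f_1=f_0 a$; composition is componentwise. A 2-arrow $(f_0,f_1)\Rightarrow(g_0,g_1)$ between morphisms $a\to b$ is a morphism $\alpha:A_0\to B_1$ of $\mathbb A$ with $f_1-g_1=\alpha a$ and $f_0-g_0=b\alpha$; vertical composition is addition of such $\alpha$'s, and whiskering is given by $(h_0,h_1)\circ\alpha=h_1\alpha$ and $\alpha\circ(e_0,e_1)=\alpha e_0$. All 2-arrows are invertible, so each $\mathbf{Hom}(a,b)$ is a groupoid. $\mathbb A^{[1]}_c$ is the full 2-subcategory of $\mathbb A^{[1]}$ on the objects $a:A_1\to A_0$ with $A_0$ projective in $\mathbb A$. A morphism $(f_0,f_1):a\to b$ induces $g:\mathrm{Ker}(a)\to\mathrm{Ker}(b)$ (restriction of $f_1$) and $h:\mathrm{Coker}(a)\to\mathrm{Coker}(b)$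 (induced by $f_0$). A morphism $f:a\to b$ of $\mathbb A^{[1]}_c$ is fully faithful in $\mathbb A^{[1]}_c$ if for every object $x$ of $\mathbb A^{[1]}_c$ the functor $f\circ-:\mathbf{Hom}(x,a)\to\mathbf{Hom}(x,b)$ is full and faithful. *)

From HB Require Import structures.
From mathcomp Require Import all_boot all_algebra.
Set Implicit Arguments. Unset Strict Implicit. Unset Printing Implicit Defensive.
Import GRing.Theory.
Local Open Scope ring_scope.

Record PreAdd := {
  ob : Type;
  homC : ob -> ob -> zmodType;
  compC : forall A B C : ob, homC B C -> homC A B -> homC A C;
  idm : forall A : ob, homC A A;
  compA : forall A B C D (h : homC C D) (g : homC B C) (f : homC A B),
      compC h (compC g f) = compC (compC h g) f;
  comp1m : forall A B (f : homC A B), compC (idm B) f = f;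
  compm1 : forall A B (f : homC A B), compC f (idm A) = f;
  compDl : forall A B C (g g' : homC B C) (f : homC A B),
      compC (g + g') f = compC g f + compC g' f;
  compDr : forall A B C (g : homC B C) (f f' : homC A B),
      compC g (f + f') = compC g f + compC g f'
}.
Arguments compC {p A B C}.
Arguments idm {p}.

Section Defs.
Variable C : PreAdd.
Local Notation ob := (ob C).
Local Notation hom := (@Defs.homC C).
Local Notation "g \o f" := (compC g f).

Definition mono {A B : ob} (f : hom A B) : Prop :=
  forall X (x y : hom X A), f \o x = f \o y -> x = y.
Definition epi {A B : ob} (f : hom A B) : Prop :=
  forall Y (x y : hom B Y), x \o f = y \o f -> x = y.
Definition iso {A B : ob} (f : hom A B) : Prop :=
  exists g : hom B A, g \o f = idm A /\ f \o g = idm B.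

Definition is_kernel {A B K : ob} (f : hom A B) (k : hom K A) : Prop :=
  f \o k = 0 /\
  forall X (x : hom X A), f \o x = 0 -> exists! u : hom X K, k \o u = x.
Definition is_cokernel {A B Q : ob} (f : hom A B) (c : hom B Q) : Prop :=
  c \o f = 0 /\
  forall Y (y : hom B Y), y \o f = 0 -> exists! u : hom Q Y, u \o c = y.

Definition is_zero_object (Z : ob) : Prop :=
  forall A, (forall f g : hom A Z, f = g) /\ (forall f g : hom Z A, f = g).

Definition is_biproduct (A B P : ob) (i1 : hom A P) (i2 : hom B P)
  (p1 : hom P A) (p2 : hom P B) : Prop :=
  [/\ p1 \o i1 = idm A, p2 \o i2 = idm B, p1 \o i2 = 0, p2 \o i1 = 0
    & (i1 \o p1) + (i2 \o p2) = idm P].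

Definition is_abelian : Prop :=
  [/\       (forall A B, exists P (i1 : hom A P) (i2 : hom B P) (p1 : hom P A)
                    (p2 : hom P B), is_biproduct i1 i2 p1 p2),
      (forall A B (f : hom A B), exists K (k : hom K A), is_kernel f k),
      (forall A B (f : hom A B), exists Q (c : hom B Q), is_cokernel f c),
      (forall A B (f : hom A B), mono f -> exists Q (c : hom B Q), is_kernel c f)
    & (forall A B (f : hom A B), epi f -> exists K (k : hom K A), is_cokernel k f)]
  /\ (exists Z, is_zero_object Z).

Definition projective (P : ob) : Prop :=
  forall B D (e : hom B D) (p : hom P D), epi e -> exists l : hom P B, e \o l = p.

Definition enough_projectives : Prop :=
  forall A, exists P (e : hom P A), projective P /\ epi e.

(** The 2-category A^[1]. An object is an arrow [a : A1 -> A0]. *)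
Record arr := Arr { src : ob; tgt : ob; arrow : hom src tgt }.
Definition in_c (a : arr) : Prop := projective (tgt a).

Record mor (a b : arr) := Mor {
  m0 : hom (tgt a) (tgt b);
  m1 : hom (src a) (src b);
  m_comm : arrow b \o m1 = m0 \o arrow a }.

Definition mor_comp (a b c : arr) (g : mor b c) (f : mor a b) :
  hom (tgt a) (tgt c) * hom (src a) (src c) :=
  (m0 g \o m0 f, m1 g \o m1 f).

Definition two_arrow (a b : arr) (f0 g0 : hom (tgt a) (tgt b))
  (f1 g1 : hom (src a) (src b)) (alpha : hom (tgt a) (src b)) : Prop :=
  f1 - g1 = (alpha \o arrow a) /\ f0 - g0 = (arrow b \o alpha).

(** [f \o - : homC(x,a) -> homC(x,b)] is full and faithful (on the groupoids).
    On objects u : x -> a it sends u to f \o u; on 2-arrows it sends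
    alpha to the whiskering f \o alpha = f1 \o alpha. *)
Definition whisker_full_faithful (x a b : arr) (f : mor a b) : Prop :=
  forall u v : mor x a,
    (forall beta : hom (tgt x) (src b),
        two_arrow (m0 f \o m0 u) (m0 f \o m0 v) (m1 f \o m1 u) (m1 f \o m1 v) beta ->
        exists alpha : hom (tgt x) (src a),
          two_arrow (m0 u) (m0 v) (m1 u) (m1 v) alpha /\ (m1 f \o alpha) = beta)
    /\
    (forall alpha alpha' : hom (tgt x) (src a),
        two_arrow (m0 u) (m0 v) (m1 u) (m1 v) alpha ->
        two_arrow (m0 u) (m0 v) (m1 u) (m1 v) alpha' ->
        m1 f \o alpha = m1 f \o alpha' -> alpha = alpha').

Definition fully_faithful_c (a b : arr) (f : mor a b) : Prop :=
  forall x : arr, in_c x -> whisker_full_faithful x f.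

End Defs.

(* Whiskering by f is the map on 2-arrows alpha |-> m1 f \o alpha, so it is
   faithful exactly when m1 f kills no nonzero map into Ker a, i.e. when g is
   mono. Testing against the objects 0 : P -> P with P projective, fullness
   forces g to be epi (lift maps into Ker b) and h to be mono (a map killed
   by h comes, through the projective P, from a 2-arrow, hence factors through
   a). Conversely, when g is an iso and h a mono, a 2-arrow beta between the
   whiskered morphisms is lifted by first factoring m0 u - m0 v through a
   (it is killed by h \o ca, hence by ca) and then correcting the defect,
   which lands in Ker b, through g^-1. Projectivity is only ever used for
   the source of the test morphisms, never for the targets of a and b. *)
From Pilot Require Import Defs.
From mathcomp Require Import all_boot all_algebra.
Import GRing.Theory.
Local Open Scope ring_scope.
Set Implicit Arguments. Unset Strict Implicit.

Section Preadditive.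
Variable C : PreAdd.
Local Notation ob := (ob C).
Local Notation hom := (@homC C).
Local Notation "g \o f" := (compC g f).

Lemma comp0m (A B D : ob) (f : hom A B) : (0 : hom B D) \o f = 0.
Proof.
have H := compDl (0 : hom B D) 0 f; rewrite addr0 in H.
by apply: (@addrI _ ((0 : hom B D) \o f)); rewrite addr0 -H.
Qed.

Lemma compm0 (A B D : ob) (g : hom B D) : g \o (0 : hom A B) = 0.
Proof.
have H := compDr g (0 : hom A B) 0; rewrite addr0 in H.
by apply: (@addrI _ (g \o (0 : hom A B))); rewrite addr0 -H.
Qed.

Lemma compBl (A B D : ob) (g g' : hom B D) (f : hom A B) :
  (g - g') \o f = (g \o f) - (g' \o f).
Proof.
by apply: (@addIr _ (g' \o f)); rewrite -compDl !subrK.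
Qed.

Lemma compBr (A B D : ob) (g : hom B D) (f f' : hom A B) :
  g \o (f - f') = (g \o f) - (g \o f').
Proof.
by apply: (@addIr _ (g \o f')); rewrite -compDr !subrK.
Qed.

Lemma mono_of_cancel0 (A B : ob) (f : hom A B) :
  (forall X (x : hom X A), f \o x = 0 -> x = 0) -> mono f.
Proof.
move=> H X x y fxy; apply/eqP; rewrite -subr_eq0; apply/eqP/H.
by rewrite compBr fxy subrr.
Qed.

Lemma epi_of_cancel0 (A B : ob) (f : hom A B) :
  (forall Y (y : hom B Y), y \o f = 0 -> y = 0) -> epi f.
Proof.
move=> H Y x y xfy; apply/eqP; rewrite -subr_eq0; apply/eqP/H.
by rewrite compBl xfy subrr.
Qed.

Lemma kernel_mono (A B K : ob) (f : hom A B) (k : hom K A) :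
  is_kernel f k -> mono k.
Proof.
move=> [fk0 U] X x y kxy.
have fkx0 : f \o (k \o x) = 0 by rewrite Defs.compA fk0 comp0m.
have [u [_ Hu]] := U X (k \o x) fkx0.
by rewrite -(Hu x erefl) (Hu y (esym kxy)).
Qed.

Lemma cokernel_epi (A B Q : ob) (f : hom A B) (c : hom B Q) :
  is_cokernel f c -> epi c.
Proof.
move=> [cf0 U] Y x y xcy.
have xcf0 : (x \o c) \o f = 0 by rewrite -Defs.compA cf0 compm0.
have [u [_ Hu]] := U Y (x \o c) xcf0.
by rewrite -(Hu x erefl) (Hu y (esym xcy)).
Qed.

Lemma mono_comp (A B D : ob) (g : hom B D) (f : hom A B) :
  mono g -> mono f -> mono (g \o f).
Proof. by move=> mg mf X x y E; apply/mf/mg; rewrite !Defs.compA. Qed.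

Lemma iso_mono (A B : ob) (g : hom A B) : iso g -> mono g.
Proof.
move=> [gi [gig _]] X x y gxy.
by rewrite -(Defs.comp1m x) -(Defs.comp1m y) -gig -!Defs.compA gxy.
Qed.

Lemma eq0_of_projective_precomp (HP : enough_projectives C) (X Y : ob)
    (d : hom X Y) :
  (forall P (e : hom P X), projective P -> epi e -> d \o e = 0) -> d = 0.
Proof.
move=> H; have [P [e [PP ee]]] := HP X.
by apply: (ee); rewrite comp0m; exact: H PP ee.
Qed.

Lemma epi_of_projective_lift (HP : enough_projectives C) (A B : ob)
    (g : hom A B) :
  (forall P (e : hom P B), projective P -> exists l : hom P A, g \o l = e) ->
  epi g.
Proof.
move=> H Y y z ygz; have [P [e [PP ee]]] := HP B; apply: ee.
by have [l <-] := H P e PP; rewrite !Defs.compA ygz.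
Qed.

Section KernelSquare.
Variables (A A' B B' Ka Kb : ob) (alpha : hom A B) (beta : hom A' B').
Variables (phi : hom A A') (ka : hom Ka A) (kb : hom Kb A') (g : hom Ka Kb).
Hypotheses (Hka : is_kernel alpha ka) (Hkb : is_kernel beta kb).
Hypothesis Hg : kb \o g = phi \o ka.

Lemma kernel_square_cancel0 (X : ob) (d : hom X A) :
  mono g -> alpha \o d = 0 -> phi \o d = 0 -> d = 0.
Proof.
move=> mg ad0 pd0; have [eps [kd _]] := proj2 Hka X d ad0.
suff eps0 : eps = 0 by rewrite -kd eps0 compm0.
apply: mg; apply: (kernel_mono Hkb).
by rewrite !compm0 Defs.compA Hg -Defs.compA kd.
Qed.

Lemma kernel_square_lift (X : ob) (gi : hom Kb Ka) (y : hom X A') :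
  g \o gi = idm Kb -> beta \o y = 0 ->
  exists x : hom X A, alpha \o x = 0 /\ phi \o x = y.
Proof.
move=> ggi by0; have [z [kz _]] := proj2 Hkb X y by0.
exists (ka \o (gi \o z)); split.
  by rewrite Defs.compA (proj1 Hka) comp0m.
by rewrite Defs.compA -Hg -!Defs.compA (Defs.compA g) ggi Defs.comp1m.
Qed.

End KernelSquare.

Section Abelian.
Hypothesis HC : is_abelian C.

Lemma mono_epi_iso (A B : ob) (g : hom A B) : mono g -> epi g -> iso g.
Proof.
move=> mg eg; case: HC => [[_ _ _ mono_kernel _] _].
have [Q [c [cg0 U]]] := mono_kernel _ _ g mg.
have c0 : c = 0 by apply: eg; rewrite cg0 comp0m.
have cid0 : c \o idm B = 0 by rewrite c0 comp0m.
have [u [gu _]] := U B (idm B) cid0.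
exists u; split=> //; apply: mg.
by rewrite Defs.compA gu Defs.comp1m Defs.compm1.
Qed.

Lemma factor_through_kernel_cokernel_epi (A1 A0 Q K : ob) (a : hom A1 A0)
    (ca : hom A0 Q) (k : hom K A0) (e : hom A1 K) :
  is_cokernel a ca -> is_kernel ca k -> k \o e = a -> epi e.
Proof.
move=> Hca Hk ke; case: HC => [[_ has_kernel _ mono_kernel _] _].
apply: epi_of_cancel0 => Y w we0.
have [M [m Hm]] := has_kernel _ _ w.
have [e' [me' _]] := proj2 Hm _ e we0.
have [Q' [c' [c'km U']]] := mono_kernel _ _ _
  (mono_comp (kernel_mono Hk) (kernel_mono Hm)).
have c'a : c' \o a = 0.
  by rewrite -ke -me' !Defs.compA -(Defs.compA c' k m) c'km comp0m.
have [t [tca _]] := proj2 Hca _ c' c'a.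
have c'k : c' \o k = 0 by rewrite -tca -Defs.compA (proj1 Hk) compm0.
have [s [kms _]] := U' _ k c'k.
have ms : m \o s = idm K.
  by apply: (kernel_mono Hk); rewrite Defs.compA kms Defs.compm1.
by rewrite -(Defs.compm1 w) -ms Defs.compA (proj1 Hm) comp0m.
Qed.

Lemma projective_lift_of_cokernel0 (A1 A0 Q P : ob) (a : hom A1 A0)
    (ca : hom A0 Q) (d : hom P A0) :
  is_cokernel a ca -> projective P -> ca \o d = 0 ->
  exists x : hom P A1, a \o x = d.
Proof.
move=> Hca PP cd0; case: HC => [[_ has_kernel _ _ _] _].
have [K [k Hk]] := has_kernel _ _ ca.
have [e [ke _]] := proj2 Hk _ a (proj1 Hca).
have [d' [kd' _]] := proj2 Hk _ d cd0.
have [l el] := PP _ _ e d' (factor_through_kernel_cokernel_epi Hca Hk ke).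
by exists l; rewrite -ke -Defs.compA el.
Qed.

End Abelian.
End Preadditive.

Definition zero_arr (C : PreAdd) (P : ob C) : arr C := @Arr C P P 0.

Section ArrowCategory.
Variable C : PreAdd.
Local Notation ob := (ob C).
Local Notation hom := (@homC C).
Local Notation "g \o f" := (compC g f).

Lemma zero_arr_comm (a : arr C) (P : ob) (w : hom P (tgt a)) :
  arrow a \o (0 : hom P (src a)) = w \o arrow (zero_arr P).
Proof. by rewrite /= !compm0. Qed.

Definition mor_from_zero (a : arr C) (P : ob) (w : hom P (tgt a)) :
  mor (zero_arr P) a := @Mor C (zero_arr P) a w 0 (zero_arr_comm w).

(* Full faithfulness tested on [zero_arr P]: 2-arrows between [(w, 0)] and
   [(w', 0)] are the [al] with [w - w' = arrow a \o al]. *)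
Section TestObjects.
Variables (a b : arr C) (f : mor a b).
Hypothesis FF : fully_faithful_c f.
Variables (P : ob) (PP : projective P).

Lemma fully_faithful_cancel0 (al : hom P (src a)) :
  arrow a \o al = 0 -> m1 f \o al = 0 -> al = 0.
Proof.
move=> aal0 fal0.
have [_ faithful] :=
  @FF (zero_arr P) PP (@mor_from_zero a P 0) (@mor_from_zero a P 0).
by apply: faithful; rewrite ?fal0 ?compm0 //; split; rewrite /= subrr ?compm0.
Qed.

Lemma fully_faithful_lift (w w' : hom P (tgt a)) (be : hom P (src b)) :
  (m0 f \o w) - (m0 f \o w') = arrow b \o be ->
  exists al : hom P (src a), w - w' = arrow a \o al /\ m1 f \o al = be.
Proof.
move=> Hbe.
have [full _] :=
  @FF (zero_arr P) PP (@mor_from_zero a P w) (@mor_from_zero a P w').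
have [|al [[_ Hal] fal]] := full be; last by exists al.
by split; rewrite //= subrr compm0.
Qed.

End TestObjects.

Section InducedMaps.
Variables (a b : arr C) (f : mor a b).
Variables (Ka Kb : ob) (ka : hom Ka (src a)) (kb : hom Kb (src b)).
Hypotheses (Hka : is_kernel (arrow a) ka) (Hkb : is_kernel (arrow b) kb).
Variables (Qa Qb : ob) (ca : hom (tgt a) Qa) (cb : hom (tgt b) Qb).
Hypotheses (Hca : is_cokernel (arrow a) ca) (Hcb : is_cokernel (arrow b) cb).
Variables (g : hom Ka Kb) (h : hom Qa Qb).
Hypotheses (Hg : kb \o g = m1 f \o ka) (Hh : h \o ca = cb \o m0 f).
Hypotheses (HC : is_abelian C) (HP : enough_projectives C).

Lemma fully_faithful_kernel_mono : fully_faithful_c f -> mono g.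
Proof.
move=> FF; apply: mono_of_cancel0 => X d gd0.
apply: (eq0_of_projective_precomp HP) => P e PP _.
have kde0 : ka \o (d \o e) = 0.
  apply: (fully_faithful_cancel0 FF PP).
    by rewrite Defs.compA (proj1 Hka) comp0m.
  by rewrite Defs.compA -Hg -Defs.compA (Defs.compA g) gd0 comp0m compm0.
by apply: (kernel_mono Hka); rewrite kde0 compm0.
Qed.

Lemma fully_faithful_kernel_epi : fully_faithful_c f -> epi g.
Proof.
move=> FF; apply: (epi_of_projective_lift HP) => P e PP.
have [|al [Hal fal]] :=
  fully_faithful_lift FF PP (w := 0) (w' := 0) (be := kb \o e).
  by rewrite compm0 subrr Defs.compA (proj1 Hkb) comp0m.
rewrite subrr in Hal; have [l [kl _]] := proj2 Hka _ al (esym Hal).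
by exists l; apply: (kernel_mono Hkb); rewrite Defs.compA Hg -Defs.compA kl.
Qed.

Lemma fully_faithful_cokernel_mono : fully_faithful_c f -> mono h.
Proof.
move=> FF; apply: mono_of_cancel0 => T d hd0.
apply: (eq0_of_projective_precomp HP) => P e PP _.
have [w cw] := PP _ _ ca (d \o e) (cokernel_epi Hca).
have cbfw : cb \o (m0 f \o w) = 0.
  by rewrite Defs.compA -Hh -Defs.compA cw Defs.compA hd0 comp0m.
have [be Hbe] := projective_lift_of_cokernel0 HC Hcb PP cbfw.
have [|al [Hal _]] := fully_faithful_lift FF PP (w := w) (w' := 0) (be := be).
  by rewrite compm0 subr0.
by rewrite -cw -(subr0 w) Hal Defs.compA (proj1 Hca) comp0m.
Qed.

Lemma kernel_mono_faithful (x : arr C) (u v : mor x a)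
    (al al' : hom (tgt x) (src a)) : mono g ->
  two_arrow (m0 u) (m0 v) (m1 u) (m1 v) al ->
  two_arrow (m0 u) (m0 v) (m1 u) (m1 v) al' ->
  m1 f \o al = m1 f \o al' -> al = al'.
Proof.
move=> mg [_ A2] [_ A2'] E; apply/eqP; rewrite -subr_eq0; apply/eqP.
apply: (kernel_square_cancel0 Hka Hkb Hg mg).
  by rewrite compBr -A2 -A2' subrr.
by rewrite compBr E subrr.
Qed.

Lemma kernel_iso_cokernel_mono_full (gi : hom Kb Ka) (x : arr C)
    (u v : mor x a) (be : hom (tgt x) (src b)) :
  g \o gi = idm Kb -> mono g -> mono h -> in_c x ->
  two_arrow (m0 f \o m0 u) (m0 f \o m0 v) (m1 f \o m1 u) (m1 f \o m1 v) be ->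
  exists al : hom (tgt x) (src a),
    two_arrow (m0 u) (m0 v) (m1 u) (m1 v) al /\ m1 f \o al = be.
Proof.
move=> ggi mg mh Px [be1 be2].
have cad0 : ca \o (m0 u - m0 v) = 0.
  apply: mh; rewrite compm0 Defs.compA Hh -Defs.compA compBr be2.
  by rewrite Defs.compA (proj1 Hcb) comp0m.
have [a0 aa0] := projective_lift_of_cokernel0 HC Hca Px cad0.
have bz : arrow b \o (be - (m1 f \o a0)) = 0.
  by rewrite compBr -be2 Defs.compA m_comm -Defs.compA aa0 compBr subrr.
have [a1 [aa1 fa1]] := kernel_square_lift Hka Hkb Hg ggi bz.
have aal : arrow a \o (a0 + a1) = m0 u - m0 v.
  by rewrite compDr aa0 aa1 addr0.
have fal : m1 f \o (a0 + a1) = be by rewrite compDr fa1 addrC subrK.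
exists (a0 + a1); split=> //; split=> //.
apply/eqP; rewrite -subr_eq0; apply/eqP.
apply: (kernel_square_cancel0 Hka Hkb Hg mg).
  by rewrite compBr Defs.compA aal compBr !m_comm compBl subrr.
by rewrite compBr Defs.compA fal compBr be1 subrr.
Qed.

End InducedMaps.
End ArrowCategory.

Theorem lemma3p2 (C : PreAdd) (HC : is_abelian C) (HP : enough_projectives C)
  (a b : arr C) (Ha : in_c a) (Hb : in_c b) (f : mor a b)
  (Ka Kb : ob C) (ka : homC Ka (src a)) (kb : homC Kb (src b))
  (Hka : is_kernel (arrow a) ka) (Hkb : is_kernel (arrow b) kb)
  (Qa Qb : ob C) (ca : homC (tgt a) Qa) (cb : homC (tgt b) Qb)
  (Hca : is_cokernel (arrow a) ca) (Hcb : is_cokernel (arrow b) cb)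
  (g : homC Ka Kb) (Hg : compC kb g = compC (m1 f) ka)
  (h : homC Qa Qb) (Hh : compC h ca = compC cb (m0 f)) :
  fully_faithful_c f <-> (iso g /\ mono h).
Proof.
split.
- move=> FF; split.
    apply: (mono_epi_iso HC).
      exact: (fully_faithful_kernel_mono Hka Hg HP FF).
    exact: (fully_faithful_kernel_epi Hka Hkb Hg HP FF).
  exact: (fully_faithful_cokernel_mono Hca Hcb Hh HC HP FF).
- move=> [g_iso mh]; have mg := iso_mono g_iso.
  have [gi [_ ggi]] := g_iso.
  move=> x Px u v; split.
    move=> be; exact: (kernel_iso_cokernel_mono_full
                         Hka Hkb Hca Hcb Hg Hh HC ggi mg mh Px).
  move=> al al'; exact: (kernel_mono_faithful Hka Hkb Hg mg).
Qed.
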